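(* Let the setting, algorithm and notation be as described in the context. For $(x,y,z)\in\mathcal X\times\mathcal Y\times\mathcal Z$ and $k\ge0$ write \[ \Gamma_{k}(x,y,z):=\big(p(x^{k+1})+q(y^{k+1})\big)-\big(p(x)+q(y)\big)+\langle x^{k+1}-x,\nabla f(x)+Az\rangle+\langle y^{k+1}-y,\nabla g(y)+Bz\rangle+\langle\tilde z^{k+1}-z,-(A^*x+B^*y-c)\rangle . \] (a) For every $k\ge0$ and $(x,y,z)\in\mathcal X\times\mathcal Y\times\mathcal Z$, \[ \Gamma_k(x,y,z)+\tfrac12\big(\phi_{k+1}(x,y,z)-\phi_k(x,y,z)\big)\le-\tfrac12\Big(s_{k+1}+(1-\tau)\sigma\|r^{k+1}\|^2+\sigma\|A^*x^{k+1}+B^*y^k-c\|^2\Big). \] (b) Assume moreover $\frac12\widehat\Sigma_g+T\succeq0$. Then for every $\alpha\in(0,1]$, every $k\ge1$ and every $(x,y,z)\in\mathcal X\times\mathcal Y\times\mathcal Z$, with $\kappa:=1-\alpha\min(\tau,\tau^{-1})$, \[ \Gamma_k(x,y,z)+\tfrac12\Big\{\big[\phi_{k+1}(x,y,z)+\kappa\sigma\|r^{k+1}\|^2+\alpha\xi_{k+1}\big]-\big[\phi_k(x,y,z)+\kappa\sigma\|r^k\|^2+\alpha\xi_k\big]\Big\}\le-\tfrac12\Big\{t_{k+1}+\big[-\tau+\alpha\min(1+\tau,1+\tau^{-1})\big]\sigma\|r^{k+1}\|^2\Big\}, \] where $t_{k+1}$ is defined with this $\alpha$.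
   Context: Let $\mathcal X,\mathcal Y,\mathcal Z$ be finite-dimensional real Euclidean spaces with inner products $\langle\cdot,\cdot\rangle$ and induced norms $\|\cdot\|$. Let $p:\mathcal X\to(-\infty,+\infty]$ and $q:\mathcal Y\to(-\infty,+\infty]$ be closed proper convex functions, and let $f:\mathcal X\to\mathbb R$, $g:\mathcal Y\to\mathbb R$ be convex differentiable functions with Lipschitz continuous gradients. Let $A:\mathcal Z\to\mathcal X$, $B:\mathcal Z\to\mathcal Y$ be linear maps with adjoints $A^*,B^*$, and $c\in\mathcal Z$. Let $\Sigma_f,\widehat\Sigma_f$ (on $\mathcal X$) and $\Sigma_g,\widehat\Sigma_g$ (on $\mathcal Y$) be self-adjoint positive semidefinite linear operators with $\widehat\Sigma_f\succeq\Sigma_f$, $\widehat\Sigma_g\succeq\Sigma_g$, such that for all $x,x'\in\mathcal X$, $y,y'\in\mathcal Y$: $f(x')+\langle x-x',\nabla f(x')\rangle+\frac12\|x-x'\|^2_{\Sigma_f}\le f(x)\le f(x')+\langle x-x',\nabla f(x')\rangle+\frac12\|x-x'\|^2_{\widehat\Sigma_f}$ and the analogous two inequalities for $g$ with $\Sigma_g,\widehat\Sigma_g$. For a self-adjoint (possibly indefinite) operator $G$, $\|u\|_G^2:=\langle u,Gu\rangle$. Algorithm (Majorized iPADMM): let $\sigma>0$, $\tau>0$, and let $S:\mathcal X\to\mathcal X$, $T:\mathcal Y\to\mathcal Y$ be self-adjoint, possibly indefinite, linear operators with $\widehat\Sigma_f+S+\sigma AA^*\succeq0$ and $\widehat\Sigma_g+T+\sigma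 BB^*\succeq0$. Starting from $(x^0,y^0,z^0)\in\mathrm{dom}(p)\times\mathrm{dom}(q)\times\mathcal Z$, for $k=0,1,\dots$: $x^{k+1}\in\arg\min_{x}\{p(x)+\langle\nabla f(x^k),x\rangle+\frac12\|x-x^k\|^2_{\widehat\Sigma_f+S}+\langle z^k,A^*x\rangle+\frac\sigma2\|A^*x+B^*y^k-c\|^2\}$, $y^{k+1}\in\arg\min_{y}\{q(y)+\langle\nabla g(y^k),y\rangle+\frac12\|y-y^k\|^2_{\widehat\Sigma_g+T}+\langle z^k,B^*y\rangle+\frac\sigma2\|A^*x^{k+1}+B^*y-c\|^2\}$, $z^{k+1}=z^k+\tau\sigma(A^*x^{k+1}+B^*y^{k+1}-c)$ (the minimizers are assumed to exist). Notation: $r^k:=A^*x^k+B^*y^k-c$, $\tilde z^{k+1}:=z^k+\sigma r^{k+1}$; for $\alpha\in(0,1]$, $H_f:=\frac12\Sigma_f+S+\frac12(1-\alpha)\sigma AA^*$ and $M_g:=\frac12\Sigma_g+T+\min(\tau,1+\tau-\tau^2)\alpha\sigma BB^*$; $\phi_k(x,y,z):=(\tau\sigma)^{-1}\|z^k-z\|^2+\|x^k-x\|^2_{\widehat\Sigma_f+S}+\|y^k-y\|^2_{\widehat\Sigma_g+T}+\sigma\|A^*x+B^*y^k-c\|^2$; $\xi_{k+1}:=\|y^{k+1}-y^k\|^2_{\widehat\Sigma_g+T}$; $s_{k+1}:=\|x^{k+1}-x^k\|^2_{\frac12\Sigma_f+S}+\|y^{k+1}-y^k\|^2_{\frac12\Sigma_g+T}$;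 $t_{k+1}:=\|x^{k+1}-x^k\|^2_{H_f}+\|y^{k+1}-y^k\|^2_{M_g}$. *)

(* Finite-dimensional real Euclidean
   spaces are modelled as column vectors 'cV[R]_n with the standard inner
   product; linear maps as matrices, adjoints as transposes. *)
From HB Require Import structures.
From mathcomp Require Import all_boot all_order all_algebra.
From mathcomp Require Import all_classical all_reals all_analysis.
Set Implicit Arguments. Unset Strict Implicit. Unset Printing Implicit Defensive.
Import Order.TTheory GRing.Theory Num.Theory.
Import numFieldNormedType.Exports.
Local Open Scope ring_scope.
Local Open Scope classical_set_scope.

Definition ip {R : realType} {n : nat} (u v : 'cV[R]_n) : R := (u^T *m v) 0 0.

Definition nrm2 {R : realType} {n : nat} (u : 'cV[R]_n) : R := ip u u.

Definition enorm {R : realType} {n : nat} (u : 'cV[R]_n) : R := Num.sqrt (nrm2 u).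

Definition sqn {R : realType} {n : nat} (G : 'M[R]_n) (u : 'cV[R]_n) : R :=
  ip u (G *m u).

Definition selfadj {R : realType} {n : nat} (G : 'M[R]_n) : Prop := G^T = G.

Definition psd {R : realType} {n : nat} (G : 'M[R]_n) : Prop :=
  forall u : 'cV[R]_n, 0 <= sqn G u.

Definition ext_valued {R : realType} {n : nat} (p : 'cV[R]_n -> \bar R) : Prop :=
  forall x, p x != -oo%E.

Definition proper_fun {R : realType} {n : nat} (p : 'cV[R]_n -> \bar R) : Prop :=
  ext_valued p /\ exists x, (p x < +oo)%E.

Definition convex_efun {R : realType} {n : nat} (p : 'cV[R]_n -> \bar R) : Prop :=
  forall (x y : 'cV[R]_n) (t : R), 0 < t < 1 ->
    (p (t *: x + (1 - t) *: y)%R <= t%:E * p x + (1 - t)%R%:E * p y)%E.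

Definition closed_efun {R : realType} {n : nat} (p : 'cV[R]_n -> \bar R) : Prop :=
  closed [set xa : 'cV[R]_n * R | (p xa.1 <= xa.2%:E)%E].

Definition convex_fun {R : realType} {n : nat} (f : 'cV[R]_n -> R) : Prop :=
  forall (x y : 'cV[R]_n) (t : R), 0 <= t <= 1 ->
    f (t *: x + (1 - t) *: y) <= t * f x + (1 - t) * f y.

Definition is_gradient {R : realType} {n : nat} (f : 'cV[R]_n -> R)
  (gradf : 'cV[R]_n -> 'cV[R]_n) : Prop :=
  forall x, differentiable f x /\ forall h, 'd f x h = ip h (gradf x).

Definition lipschitz_fun {R : realType} {n : nat} (F : 'cV[R]_n -> 'cV[R]_n) : Prop :=
  exists L : R, forall x y, enorm (F x - F y) <= L * enorm (x - y).

Definition quad_bounds {R : realType} {n : nat} (f : 'cV[R]_n -> R)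
  (gradf : 'cV[R]_n -> 'cV[R]_n) (Sig Sighat : 'M[R]_n) : Prop :=
  forall x x' : 'cV[R]_n,
    f x' + ip (x - x') (gradf x') + 2^-1 * sqn Sig (x - x') <= f x /\
    f x <= f x' + ip (x - x') (gradf x') + 2^-1 * sqn Sighat (x - x').

From HB Require Import structures.
From mathcomp Require Import all_boot all_order all_algebra.
From mathcomp Require Import all_classical all_reals all_analysis.
From mathcomp Require Import ring lra.
Set Implicit Arguments. Unset Strict Implicit. Unset Printing Implicit Defensive.
Import Order.TTheory GRing.Theory Num.Theory.
Import numFieldNormedType.Exports.
Local Open Scope ring_scope.

(* Both estimates are nonnegative combinations of elementary inequalities.
   Since x^{k+1} and y^{k+1} minimise convex functions plus smooth quadratics,
   convexity of p and q yields first-order variational inequalities; the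
   two-sided quadratic bounds on f and g control the gradient terms; and the
   multiplier update z^{k+1} = z^k + tau sigma r^{k+1} converts the change of
   ||z^k - z||^2 into cross terms with r^{k+1}.  Once every inner product is
   expanded, (a) is the sum of these facts.  For (b) one adds, with weight
   alpha, the y-variational inequalities of two consecutive steps, which bound
   <r^{k+1}, B^*(y^{k+1} - y^k)>, and absorbs the remaining cross terms with
   ||u - v||^2 >= 0 and ||tau u + v||^2 >= 0. *)

Section InnerProduct.
Variable R : realType.

Lemma ip_sum n (u v : 'cV[R]_n) : ip u v = \sum_i u i 0 * v i 0.
Proof. by rewrite /ip !mxE; apply: eq_bigr => i _; rewrite mxE. Qed.

Lemma ipC n (u v : 'cV[R]_n) : ip u v = ip v u.
Proof. by rewrite !ip_sum; apply: eq_bigr => i _; rewrite mulrC. Qed.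

Lemma ipDl n (u v w : 'cV[R]_n) : ip (u + v) w = ip u w + ip v w.
Proof. by rewrite !ip_sum -big_split; apply: eq_bigr => i _; rewrite mxE mulrDl. Qed.

Lemma ipDr n (u v w : 'cV[R]_n) : ip w (u + v) = ip w u + ip w v.
Proof. by rewrite ipC ipDl !(ipC w). Qed.

Lemma ipZl n a (u w : 'cV[R]_n) : ip (a *: u) w = a * ip u w.
Proof. by rewrite !ip_sum mulr_sumr; apply: eq_bigr => i _; rewrite mxE mulrA. Qed.

Lemma ipZr n a (u w : 'cV[R]_n) : ip w (a *: u) = a * ip w u.
Proof. by rewrite ipC ipZl ipC. Qed.

Lemma ipNl n (u w : 'cV[R]_n) : ip (- u) w = - ip u w.
Proof. by rewrite -scaleN1r ipZl mulN1r. Qed.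

Lemma ipNr n (u w : 'cV[R]_n) : ip w (- u) = - ip w u.
Proof. by rewrite ipC ipNl ipC. Qed.

Lemma ip_mulmxl n m (M : 'M[R]_(n, m)) u v : ip (M *m u) v = ip u (M^T *m v).
Proof. by rewrite /ip trmx_mul mulmxA. Qed.

Lemma ip_mulmxr n m (M : 'M[R]_(n, m)) u v : ip v (M *m u) = ip (M^T *m v) u.
Proof. by rewrite ipC ip_mulmxl ipC. Qed.

Lemma ip_selfadjl n (Q : 'M[R]_n) u v : selfadj Q -> ip (Q *m u) v = ip u (Q *m v).
Proof. by move=> hQ; rewrite ip_mulmxl hQ. Qed.

Lemma ip_selfadjC n (Q : 'M[R]_n) u v : selfadj Q -> ip u (Q *m v) = ip v (Q *m u).
Proof. by move=> hQ; rewrite ip_mulmxr hQ ipC. Qed.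

Lemma selfadjD n (Q1 Q2 : 'M[R]_n) : selfadj Q1 -> selfadj Q2 -> selfadj (Q1 + Q2).
Proof. by move=> h1 h2; rewrite /selfadj linearD /= h1 h2. Qed.

Lemma nrm2_ge0 n (u : 'cV[R]_n) : 0 <= nrm2 u.
Proof. by rewrite /nrm2 ip_sum; apply: sumr_ge0 => i _; rewrite -expr2 sqr_ge0. Qed.

Lemma sqnD n (Q1 Q2 : 'M[R]_n) u : sqn (Q1 + Q2) u = sqn Q1 u + sqn Q2 u.
Proof. by rewrite /sqn mulmxDl ipDr. Qed.

Lemma sqnZ n a (Q : 'M[R]_n) u : sqn (a *: Q) u = a * sqn Q u.
Proof. by rewrite /sqn -scalemxAl ipZr. Qed.

Lemma sqn_mulmx_tr n m (M : 'M[R]_(n, m)) u : sqn (M *m M^T) u = nrm2 (M^T *m u).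
Proof. by rewrite /sqn -mulmxA ip_mulmxr. Qed.

End InnerProduct.

Ltac ip_expand := do 3 rewrite ?mulmxDr ?mulmxN ?mulmxDl ?mulNmx -?scalemxAr
  -?scalemxAl -?mulmxA ?ipDl ?ipDr ?ipNl ?ipNr ?ipZl ?ipZr.

(* Orients every pairing, by symmetry of [ip] and of the self-adjoint operators
   in context, so that equal pairings become syntactically equal atoms for [lra]. *)
Ltac ip_normalize :=
  repeat match goal with
  | |- context[ip (?Q *m ?u) ?v] =>
      match goal with hQ : selfadj Q |- _ => rewrite (ip_selfadjl u v hQ) end
  | |- context[ip ?u (?Q *m ?v)] =>
      tryif constr_eq u v then fail else
      match goal with |- context[ip v (Q *m u)] =>
        match goal with hQ : selfadj Q |- _ => rewrite (ip_selfadjC v u hQ) end end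
  | |- context[ip ?u ?v] =>
      tryif constr_eq u v then fail else
      match goal with |- context[ip v u] => rewrite (ipC v u) end
  end.

Section Norms.
Variable R : realType.

Lemma nrm2D n (u v : 'cV[R]_n) : nrm2 (u + v) = nrm2 u + 2 * ip u v + nrm2 v.
Proof. rewrite /nrm2; ip_expand; ip_normalize; ring. Qed.

Lemma nrm2Z n a (u : 'cV[R]_n) : nrm2 (a *: u) = a ^+ 2 * nrm2 u.
Proof. rewrite /nrm2; ip_expand; ring. Qed.

End Norms.

Section Optimality.
Variable R : realType.

Lemma ler_of_forall_ler_addtM (a b c : R) : 0 <= c ->
  (forall t, 0 < t < 1 -> a <= b + t * c) -> a <= b.
Proof.
move=> c0 hab; apply/ler_addgt0Pr => e e0.
have ce0 : 0 < c + e + e by lra.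
have t0 : 0 < e / (c + e + e) by rewrite divr_gt0.
have t1 : e / (c + e + e) < 1 by rewrite ltr_pdivrMr //; lra.
have tc : e / (c + e + e) * c <= e.
  by rewrite mulrAC ler_pdivrMr // -subr_ge0 -mulrBr mulr_ge0 //; lra.
by have := hab _ (introT andP (conj t0 t1)); lra.
Qed.

Lemma argmin_fin_num n (p : 'cV[R]_n -> \bar R) (h : 'cV[R]_n -> R) x1 :
  proper_fun p -> (forall x, (p x1 + (h x1)%:E <= p x + (h x)%:E)%E) ->
  p x1 \is a fin_num.
Proof.
move=> [pNy [x px]] hmin; rewrite fin_numE pNy /=.
have fx : p x \is a fin_num by rewrite fin_numE pNy /= lt_eqF.
apply/negP => /eqP p1; move: (hmin x).
by rewrite -(fineK fx) p1 addye //= -EFinD leye_eq.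
Qed.

(* Comparing [x1] with the points [x1 + t (x - x1)] of the segment towards [x]
   and letting [t] go to [0] yields the first-order optimality condition. *)
Lemma convex_argmin_vi n (p : 'cV[R]_n -> \bar R) (h : 'cV[R]_n -> R)
    (g : 'cV[R]_n) (C : 'cV[R]_n -> R) x1 :
  convex_efun p ->
  (forall x, (p x1 + (h x1)%:E <= p x + (h x)%:E)%E) ->
  (forall d t, h (x1 + t *: d) = h x1 + t * ip g d + t ^+ 2 * C d) ->
  (forall d, 0 <= C d) ->
  p x1 \is a fin_num -> forall x, p x \is a fin_num ->
  fine (p x1) - fine (p x) <= ip g (x - x1).
Proof.
move=> pconv hmin hexp C0 f1 x fx.
apply: (ler_of_forall_ler_addtM (C0 (x - x1))) => t /andP[t0 t1].
have seg : t *: x + (1 - t) *: x1 = x1 + t *: (x - x1).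
  by apply/matrixP => i j; rewrite !mxE; ring.
have := pconv x x1 t; rewrite t0 t1 seg => /(_ isT).
have := hmin (x1 + t *: (x - x1)); rewrite hexp -(fineK f1) -(fineK fx).
rewrite -!EFinM -!EFinD => /le_trans hle /(leeD2r (h x1 + t * ip g (x - x1)
  + t ^+ 2 * C (x - x1))%:E) /hle; rewrite -!EFinD lee_fin => ineq.
have : t * (fine (p x1) - fine (p x)) <= t * (ip g (x - x1) + t * C (x - x1)).
  by lra.
by rewrite ler_pM2l.
Qed.

Definition admm_model n m (Q : 'M[R]_n) (M : 'M[R]_(n, m)) (a x0 : 'cV[R]_n)
    (z b : 'cV[R]_m) (sigma : R) (x : 'cV[R]_n) : R :=
  ip a x + 2^-1 * sqn Q (x - x0) + ip z (M^T *m x) + sigma / 2 * nrm2 (M^T *m x + b).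

Lemma admm_model_shift n m (Q : 'M[R]_n) (M : 'M[R]_(n, m)) a x0 z b sigma x1 d t :
  selfadj Q ->
  admm_model Q M a x0 z b sigma (x1 + t *: d) = admm_model Q M a x0 z b sigma x1
    + t * ip (a + Q *m (x1 - x0) + M *m z + sigma *: (M *m (M^T *m x1 + b))) d
    + t ^+ 2 * (2^-1 * (sqn Q d + sigma * nrm2 (M^T *m d))).
Proof.
move=> hQ; rewrite /admm_model /sqn /nrm2; ip_expand.
by rewrite ?(ip_selfadjl _ _ hQ) ?(ip_mulmxl M); ip_normalize; field.
Qed.

Lemma admm_model_argmin_vi n m (p : 'cV[R]_n -> \bar R) (Q : 'M[R]_n)
    (M : 'M[R]_(n, m)) a x0 z b sigma x1 :
  proper_fun p -> convex_efun p -> selfadj Q -> psd (Q + sigma *: (M *m M^T)) ->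
  (forall x, (p x1 + (admm_model Q M a x0 z b sigma x1)%:E
              <= p x + (admm_model Q M a x0 z b sigma x)%:E)%E) ->
  forall x, p x \is a fin_num ->
  fine (p x1) - fine (p x)
    <= ip (a + Q *m (x1 - x0) + M *m z + sigma *: (M *m (M^T *m x1 + b))) (x - x1).
Proof.
move=> pp pc hQ pQ hmin.
apply: (convex_argmin_vi pc hmin _ _ (argmin_fin_num pp hmin)).
  by move=> d t; exact: admm_model_shift.
move=> d; apply: mulr_ge0; first by rewrite invr_ge0 ler0n.
by have := pQ d; rewrite sqnD sqnZ sqn_mulmx_tr.
Qed.

End Optimality.

Section QuadraticBounds.
Variables (R : realType) (n : nat) (f : 'cV[R]_n -> R) (gradf : 'cV[R]_n -> 'cV[R]_n).
Variables (Sf Shf : 'M[R]_n).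
Hypotheses (qb : quad_bounds f gradf Sf Shf) (pSf : psd Sf).
Hypotheses (hSf : selfadj Sf) (hShf : selfadj Shf).

Lemma quad_bounds_three_point x x0 x1 :
  ip (gradf x0) (x - x1) + ip (x1 - x) (gradf x)
    <= 2^-1 * sqn Shf (x1 - x0) - 4^-1 * sqn Sf (x1 - x0).
Proof.
have [lb_x _] := qb x x0; have [_ ub_x1] := qb x1 x0; have [lb_x1 _] := qb x1 x.
have := pSf (x - x0 - (x1 - x)).
move: lb_x ub_x1 lb_x1; rewrite /sqn; ip_expand; ip_normalize; lra.
Qed.

Lemma quad_bounds_grad_ip_ge a b v :
  - ip (gradf a - gradf b) v <= 4^-1 * sqn Shf (v - (a - b)).
Proof.
set h := 2^-1 *: (v - (a - b)).
have [lb1 _] := qb (a + h) b; have [_ ub1] := qb (a + h) a.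
have [lb2 _] := qb (b - h) a; have [_ ub2] := qb (b - h) b.
have := pSf (a + h - b); have := pSf (b - h - a).
move: lb1 ub1 lb2 ub2; rewrite /h /sqn; ip_expand; ip_normalize; lra.
Qed.

End QuadraticBounds.

Section ScalarSteps.
Variable R : realType.

(* The case split [tau <= 1] / [tau > 1] is where the minima in [M_g] and in
   [kappa] come from. *)
Lemma step_weights_ge0 (tau NB W N : R) : 0 < tau ->
  0 <= NB - 2 * W + N -> 0 <= tau ^+ 2 * NB + 2 * tau * W + N ->
  0 <= (1 - Num.min tau (1 + tau - tau ^+ 2)) * NB - 2 * (1 - tau) * W
       + (1 - Num.min tau tau^-1) * N.
Proof.
move=> t0 h1 h2; have [t1|t1] := leP tau 1.
  rewrite min_l; last by nra.
  rewrite min_l; last by rewrite -(ler_pM2l t0) mulfV ?gt_eqF //; nra.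
  have := mulr_ge0 (x := 1 - tau) (y := NB - 2 * W + N).
  by rewrite subr_ge0 => /(_ t1 h1); lra.
rewrite min_r; last by nra.
rewrite min_r; last by rewrite -(ler_pM2l t0) mulfV ?gt_eqF //; nra.
have -> : (1 - (1 + tau - tau ^+ 2)) * NB - 2 * (1 - tau) * W + (1 - tau^-1) * N
  = (1 - tau^-1) * (tau ^+ 2 * NB + 2 * tau * W + N) by field; rewrite gt_eqF.
by apply: mulr_ge0 => //; rewrite subr_ge0 invf_le1 //; lra.
Qed.

Lemma improved_descent_combination (G phi1 phi0 s NA NB N1 N0 NV W W0 xi1 xi0
    sigma tau alpha : R) :
  0 < sigma -> 0 < tau -> 0 < alpha <= 1 ->
  G + 2^-1 * (phi1 - phi0) <= - (2^-1 * (s + (1 - tau) * sigma * N1 + sigma * NV)) ->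
  NA <= 2 * NV + 2 * N0 ->
  NV = N1 - 2 * W + NB ->
  2 * sigma * W + xi1 - xi0 <= 2 * (1 - tau) * sigma * W0 ->
  0 <= (1 - Num.min tau (1 + tau - tau ^+ 2)) * NB - 2 * (1 - tau) * W0
       + (1 - Num.min tau tau^-1) * N0 ->
  G + 2^-1 * ((phi1 + (1 - alpha * Num.min tau tau^-1) * sigma * N1 + alpha * xi1)
              - (phi0 + (1 - alpha * Num.min tau tau^-1) * sigma * N0 + alpha * xi0))
  <= - (2^-1 * ((s + (2^-1 * (1 - alpha) * sigma) * NA
                 + (Num.min tau (1 + tau - tau ^+ 2) * alpha * sigma) * NB)
                + (- tau + alpha * Num.min (1 + tau) (1 + tau^-1)) * sigma * N1)).
Proof.
move=> s0 t0 /andP[a0 a1] desc hNA hNV hxi hw.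
have -> : Num.min (1 + tau) (1 + tau^-1) = 1 + Num.min tau tau^-1.
  by rewrite !minEle lerD2l; case: ifP.
set mu := Num.min tau (1 + tau - tau ^+ 2) in hw *.
set nu := Num.min tau tau^-1 in hw *.
have mix_NA : 0 <= (1 - alpha) * sigma * (2 * NV + 2 * N0 - NA).
  by rewrite !mulr_ge0 //; lra.
have mix_xi : 0 <= alpha * (2 * (1 - tau) * sigma * W0 - (2 * sigma * W + xi1 - xi0)).
  by rewrite mulr_ge0 //; lra.
have mix_weights :
    0 <= alpha * sigma * ((1 - mu) * NB - 2 * (1 - tau) * W0 + (1 - nu) * N0).
  by rewrite !mulr_ge0 //; lra.
have mix_NV : alpha * sigma * (NV - (N1 - 2 * W + NB)) = 0 by rewrite hNV subrr mulr0.
lra.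
Qed.

End ScalarSteps.

Lemma ereal_gap_le (R : realType) (a1 a0 b1 b0 : \bar R) (r r' U : R) :
  a1 \is a fin_num -> b1 \is a fin_num -> a0 != -oo%E -> b0 != -oo%E ->
  (a0 \is a fin_num -> b0 \is a fin_num ->
   fine a1 + fine b1 - (fine a0 + fine b0) + r + r' <= U) ->
  ((a1 + b1) - (a0 + b0) + r%:E + r'%:E <= U%:E)%E.
Proof.
case: a1 => // r1 _; case: b1 => // s1 _.
case: a0 => [r0| |] // _; case: b0 => [s0| |] // _ /=.
- by move=> /(_ isT isT) h; rewrite -!EFinD lee_fin.
all: by move=> _; rewrite addeNy !addNye leNye.
Qed.

Section MajorizedIPADMM.
Variables (R : realType) (nx ny nz : nat).
Variables (p : 'cV[R]_nx -> \bar R) (q : 'cV[R]_ny -> \bar R).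
Variables (f : 'cV[R]_nx -> R) (g : 'cV[R]_ny -> R).
Variables (gradf : 'cV[R]_nx -> 'cV[R]_nx) (gradg : 'cV[R]_ny -> 'cV[R]_ny).
Variables (A : 'M[R]_(nx, nz)) (B : 'M[R]_(ny, nz)) (c : 'cV[R]_nz).
Variables (Sf Shf S : 'M[R]_nx) (Sg Shg T : 'M[R]_ny) (sigma tau : R).
Variables (X : nat -> 'cV[R]_nx) (Y : nat -> 'cV[R]_ny) (Z : nat -> 'cV[R]_nz).
Hypotheses (pp : proper_fun p) (pc : convex_efun p).
Hypotheses (qp : proper_fun q) (qc : convex_efun q).
Hypotheses (hSf : selfadj Sf) (pSf : psd Sf) (hShf : selfadj Shf).
Hypotheses (hSg : selfadj Sg) (pSg : psd Sg) (hShg : selfadj Shg).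
Hypotheses (qbf : quad_bounds f gradf Sf Shf) (qbg : quad_bounds g gradg Sg Shg).
Hypotheses (sigma_gt0 : 0 < sigma) (tau_gt0 : 0 < tau).
Hypotheses (hS : selfadj S) (hT : selfadj T).
Hypotheses (pQx : psd (Shf + S + sigma *: (A *m A^T)))
           (pQy : psd (Shg + T + sigma *: (B *m B^T))).
Hypothesis x_update : forall (k : nat) (x : 'cV[R]_nx),
  (p (X k.+1) + (ip (gradf (X k)) (X k.+1)
     + 2^-1 * sqn (Shf + S) (X k.+1 - X k) + ip (Z k) (A^T *m X k.+1)
     + sigma / 2 * nrm2 (A^T *m X k.+1 + B^T *m Y k - c))%:E
   <= p x + (ip (gradf (X k)) x
     + 2^-1 * sqn (Shf + S) (x - X k) + ip (Z k) (A^T *m x)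
     + sigma / 2 * nrm2 (A^T *m x + B^T *m Y k - c))%:E)%E.
Hypothesis y_update : forall (k : nat) (y : 'cV[R]_ny),
  (q (Y k.+1) + (ip (gradg (Y k)) (Y k.+1)
     + 2^-1 * sqn (Shg + T) (Y k.+1 - Y k) + ip (Z k) (B^T *m Y k.+1)
     + sigma / 2 * nrm2 (A^T *m X k.+1 + B^T *m Y k.+1 - c))%:E
   <= q y + (ip (gradg (Y k)) y
     + 2^-1 * sqn (Shg + T) (y - Y k) + ip (Z k) (B^T *m y)
     + sigma / 2 * nrm2 (A^T *m X k.+1 + B^T *m y - c))%:E)%E.
Hypothesis z_update : forall k : nat,
  Z k.+1 = Z k + (tau * sigma) *: (A^T *m X k.+1 + B^T *m Y k.+1 - c).

(* [sdist k], [tdist alpha k] and [coupling k x y z] are the paper's s_{k+1},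
   t_{k+1} and the inner-product part of Gamma_k. *)
Local Notation res k := (A^T *m X k + B^T *m Y k - c).
Local Notation phi k x y z := ((tau * sigma)^-1 * nrm2 (Z k - z)
  + sqn (Shf + S) (X k - x) + sqn (Shg + T) (Y k - y)
  + sigma * nrm2 (A^T *m x + B^T *m Y k - c)).
Local Notation xi k := (sqn (Shg + T) (Y k - Y k.-1)).
Local Notation sdist k :=
  (sqn (2^-1 *: Sf + S) (X k.+1 - X k) + sqn (2^-1 *: Sg + T) (Y k.+1 - Y k)).
Local Notation tdist alpha k :=
  (sqn (2^-1 *: Sf + S + (2^-1 * (1 - alpha) * sigma) *: (A *m A^T)) (X k.+1 - X k)
   + sqn (2^-1 *: Sg + T + (Num.min tau (1 + tau - tau ^+ 2) * alpha * sigma)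
                           *: (B *m B^T)) (Y k.+1 - Y k)).
Local Notation kappa alpha := (1 - alpha * Num.min tau tau^-1).
Local Notation coupling k x y z :=
  (ip (X k.+1 - x) (gradf x + A *m z) + ip (Y k.+1 - y) (gradg y + B *m z)
   + ip (Z k + sigma *: res k.+1 - z) (- (A^T *m x + B^T *m y - c))).

Lemma x_update_model k x :
  (p (X k.+1) + (admm_model (Shf + S) A (gradf (X k)) (X k) (Z k) (B^T *m Y k - c)
                   sigma (X k.+1))%:E
   <= p x + (admm_model (Shf + S) A (gradf (X k)) (X k) (Z k) (B^T *m Y k - c)
               sigma x)%:E)%E.
Proof. by rewrite /admm_model !addrA; exact: x_update. Qed.

Lemma y_update_model k y :
  (q (Y k.+1) + (admm_model (Shg + T) B (gradg (Y k)) (Y k) (Z k)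
                   (A^T *m X k.+1 - c) sigma (Y k.+1))%:E
   <= q y + (admm_model (Shg + T) B (gradg (Y k)) (Y k) (Z k)
               (A^T *m X k.+1 - c) sigma y)%:E)%E.
Proof.
have e v : B^T *m v + (A^T *m X k.+1 - c) = A^T *m X k.+1 + B^T *m v - c.
  by rewrite addrCA addrA.
by rewrite /admm_model !e; exact: y_update.
Qed.

Lemma X_fin k : p (X k.+1) \is a fin_num.
Proof. exact: argmin_fin_num pp (x_update_model k). Qed.

Lemma Y_fin k : q (Y k.+1) \is a fin_num.
Proof. exact: argmin_fin_num qp (y_update_model k). Qed.

Lemma x_update_vi k x : p x \is a fin_num ->
  fine (p (X k.+1)) - fine (p x)
    <= ip (gradf (X k) + (Shf + S) *m (X k.+1 - X k) + A *m Z k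
           + sigma *: (A *m (A^T *m X k.+1 + (B^T *m Y k - c)))) (x - X k.+1).
Proof. exact: admm_model_argmin_vi pp pc (selfadjD hShf hS) pQx (x_update_model k) x. Qed.

Lemma y_update_vi k y : q y \is a fin_num ->
  fine (q (Y k.+1)) - fine (q y)
    <= ip (gradg (Y k) + (Shg + T) *m (Y k.+1 - Y k) + B *m Z k
           + sigma *: (B *m (B^T *m Y k.+1 + (A^T *m X k.+1 - c)))) (y - Y k.+1).
Proof. exact: admm_model_argmin_vi qp qc (selfadjD hShg hT) pQy (y_update_model k) y. Qed.

Lemma dual_dist_step k z :
  (tau * sigma)^-1 * nrm2 (Z k.+1 - z) = (tau * sigma)^-1 * nrm2 (Z k - z)
    + 2 * ip (Z k - z) (res k.+1) + tau * sigma * nrm2 (res k.+1).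
Proof.
rewrite z_update (addrAC (Z k)) (nrm2D (Z k - z)) nrm2Z ipZr.
by field; rewrite !gt_eqF.
Qed.

Lemma descent_real k x y z : p x \is a fin_num -> q y \is a fin_num ->
  fine (p (X k.+1)) + fine (q (Y k.+1)) - (fine (p x) + fine (q y))
  + coupling k x y z + 2^-1 * (phi k.+1 x y z - phi k x y z)
  <= - (2^-1 * (sdist k + (1 - tau) * sigma * nrm2 (res k.+1)
                + sigma * nrm2 (A^T *m X k.+1 + B^T *m Y k - c))).
Proof.
move=> fx fy; rewrite dual_dist_step.
have := x_update_vi k fx; have := y_update_vi k fy.
have := quad_bounds_three_point qbf pSf hSf hShf x (X k) (X k.+1).
have := quad_bounds_three_point qbg pSg hSg hShg y (Y k) (Y k.+1).
rewrite /sqn /nrm2; ip_expand.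
rewrite ?(ip_mulmxl A) ?(ip_mulmxr A) ?(ip_mulmxl B) ?(ip_mulmxr B); ip_expand.
ip_normalize; lra.
Qed.

Lemma descent k x y z :
  ((p (X k.+1) + q (Y k.+1)) - (p x + q y) + (coupling k x y z)%:E
   + (2^-1 * (phi k.+1 x y z - phi k x y z))%:E
   <= (- (2^-1 * (sdist k + (1 - tau) * sigma * nrm2 (res k.+1)
                  + sigma * nrm2 (A^T *m X k.+1 + B^T *m Y k - c))))%:E)%E.
Proof.
apply: ereal_gap_le; [exact: X_fin | exact: Y_fin | exact: pp.1 | exact: qp.1 |].
exact: descent_real.
Qed.

Hypothesis pShT : psd (2^-1 *: Shg + T).

Lemma y_update_consecutive k :
  2 * sigma * ip (res k.+2) (B^T *m (Y k.+2 - Y k.+1)) + xi k.+2 - xi k.+1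
    <= 2 * (1 - tau) * sigma * ip (res k.+1) (B^T *m (Y k.+2 - Y k.+1)).
Proof.
have := y_update_vi k.+1 (Y_fin k); have := y_update_vi k (Y_fin k.+1).
have := quad_bounds_grad_ip_ge qbg pSg hSg hShg (Y k.+1) (Y k) (Y k.+2 - Y k.+1).
have := pShT (Y k.+2 - Y k.+1 - (Y k.+1 - Y k)).
rewrite z_update /sqn /nrm2 /=; ip_expand.
rewrite ?(ip_mulmxl A) ?(ip_mulmxr A) ?(ip_mulmxl B) ?(ip_mulmxr B); ip_expand.
ip_normalize; lra.
Qed.

Lemma improved_descent_real alpha k x y z : 0 < alpha <= 1 ->
  p x \is a fin_num -> q y \is a fin_num ->
  fine (p (X k.+2)) + fine (q (Y k.+2)) - (fine (p x) + fine (q y))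
  + coupling k.+1 x y z
  + 2^-1 * ((phi k.+2 x y z + kappa alpha * sigma * nrm2 (res k.+2) + alpha * xi k.+2)
            - (phi k.+1 x y z + kappa alpha * sigma * nrm2 (res k.+1) + alpha * xi k.+1))
  <= - (2^-1 * (tdist alpha k.+1
                + (- tau + alpha * Num.min (1 + tau) (1 + tau^-1))
                  * sigma * nrm2 (res k.+2))).
Proof.
move=> alpha01 fx fy.
set w := B^T *m (Y k.+2 - Y k.+1).
have hNA : nrm2 (A^T *m (X k.+2 - X k.+1))
    <= 2 * nrm2 (A^T *m X k.+2 + B^T *m Y k.+1 - c) + 2 * nrm2 (res k.+1).
  have := nrm2_ge0 (A^T *m X k.+2 + B^T *m Y k.+1 - c + res k.+1).
  by rewrite /nrm2; ip_expand; ip_normalize; lra.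
have hNV : nrm2 (A^T *m X k.+2 + B^T *m Y k.+1 - c)
    = nrm2 (res k.+2) - 2 * ip (res k.+2) w + nrm2 w.
  by rewrite /w /nrm2; ip_expand; ip_normalize; lra.
have hw : 0 <= (1 - Num.min tau (1 + tau - tau ^+ 2)) * nrm2 w
    - 2 * (1 - tau) * ip (res k.+1) w + (1 - Num.min tau tau^-1) * nrm2 (res k.+1).
  apply: step_weights_ge0 => //.
    by have := nrm2_ge0 (w - res k.+1); rewrite /nrm2; ip_expand; ip_normalize; lra.
  by have := nrm2_ge0 (tau *: w + res k.+1); rewrite nrm2D nrm2Z ipZl; ip_normalize; lra.
have := improved_descent_combination sigma_gt0 tau_gt0 alpha01 (descent_real k.+1 z fx fy)
  hNA hNV (y_update_consecutive k) hw.
rewrite ![sqn (_ + _ *: (_ *m _^T)) _]sqnD !sqnZ !sqn_mulmx_tr.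
lra.
Qed.

Lemma improved_descent alpha k x y z : 0 < alpha <= 1 ->
  ((p (X k.+2) + q (Y k.+2)) - (p x + q y) + (coupling k.+1 x y z)%:E
   + (2^-1 * ((phi k.+2 x y z + kappa alpha * sigma * nrm2 (res k.+2) + alpha * xi k.+2)
              - (phi k.+1 x y z + kappa alpha * sigma * nrm2 (res k.+1)
                 + alpha * xi k.+1)))%:E
   <= (- (2^-1 * (tdist alpha k.+1
                  + (- tau + alpha * Num.min (1 + tau) (1 + tau^-1))
                    * sigma * nrm2 (res k.+2))))%:E)%E.
Proof.
move=> alpha01.
apply: ereal_gap_le; [exact: X_fin | exact: Y_fin | exact: pp.1 | exact: qp.1 |].
exact: improved_descent_real.
Qed.

End MajorizedIPADMM.

Theorem proposition3p4 (R : realType) (nx ny nz : nat)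
  (p : 'cV[R]_nx -> \bar R) (q : 'cV[R]_ny -> \bar R)
  (f : 'cV[R]_nx -> R) (g : 'cV[R]_ny -> R)
  (gradf : 'cV[R]_nx -> 'cV[R]_nx) (gradg : 'cV[R]_ny -> 'cV[R]_ny)
  (A : 'M[R]_(nx, nz)) (B : 'M[R]_(ny, nz)) (c : 'cV[R]_nz)
  (Sf Shf S : 'M[R]_nx) (Sg Shg T : 'M[R]_ny)
  (sigma tau : R)
  (X : nat -> 'cV[R]_nx) (Y : nat -> 'cV[R]_ny) (Z : nat -> 'cV[R]_nz) :
  (* p, q closed proper convex *)
  proper_fun p -> convex_efun p -> closed_efun p ->
  proper_fun q -> convex_efun q -> closed_efun q ->
  (* f, g convex, differentiable, Lipschitz gradients *)
  convex_fun f -> is_gradient f gradf -> lipschitz_fun gradf ->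
  convex_fun g -> is_gradient g gradg -> lipschitz_fun gradg ->
  (* Sigma operators *)
  selfadj Sf -> psd Sf -> selfadj Shf -> psd Shf -> psd (Shf - Sf) ->
  selfadj Sg -> psd Sg -> selfadj Shg -> psd Shg -> psd (Shg - Sg) ->
  quad_bounds f gradf Sf Shf -> quad_bounds g gradg Sg Shg ->
  (* algorithm parameters *)
  0 < sigma -> 0 < tau ->
  selfadj S -> selfadj T ->
  psd (Shf + S + sigma *: (A *m A^T)) -> psd (Shg + T + sigma *: (B *m B^T)) ->
  (* starting point *)
  (p (X 0%N) < +oo)%E -> (q (Y 0%N) < +oo)%E ->
  (* x-update *)
  (forall (k : nat) (x : 'cV[R]_nx),
     (p (X k.+1) + (ip (gradf (X k)) (X k.+1)
        + 2^-1 * sqn (Shf + S) (X k.+1 - X k) + ip (Z k) (A^T *m X k.+1)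
        + sigma / 2 * nrm2 (A^T *m X k.+1 + B^T *m Y k - c))%:E
      <= p x + (ip (gradf (X k)) x
        + 2^-1 * sqn (Shf + S) (x - X k) + ip (Z k) (A^T *m x)
        + sigma / 2 * nrm2 (A^T *m x + B^T *m Y k - c))%:E)%E) ->
  (* y-update *)
  (forall (k : nat) (y : 'cV[R]_ny),
     (q (Y k.+1) + (ip (gradg (Y k)) (Y k.+1)
        + 2^-1 * sqn (Shg + T) (Y k.+1 - Y k) + ip (Z k) (B^T *m Y k.+1)
        + sigma / 2 * nrm2 (A^T *m X k.+1 + B^T *m Y k.+1 - c))%:E
      <= q y + (ip (gradg (Y k)) y
        + 2^-1 * sqn (Shg + T) (y - Y k) + ip (Z k) (B^T *m y)
        + sigma / 2 * nrm2 (A^T *m X k.+1 + B^T *m y - c))%:E)%E) ->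
  (* z-update *)
  (forall k : nat,
     Z k.+1 = Z k + (tau * sigma) *: (A^T *m X k.+1 + B^T *m Y k.+1 - c)) ->
  let r := fun k : nat => A^T *m X k + B^T *m Y k - c in
  let ztil := fun k : nat => Z k + sigma *: r k.+1 in  (* ztil k = \tilde z^{k+1} *)
  let Gamma := fun (k : nat) (x : 'cV[R]_nx) (y : 'cV[R]_ny) (z : 'cV[R]_nz) =>
    ((p (X k.+1) + q (Y k.+1)) - (p x + q y)
     + (ip (X k.+1 - x) (gradf x + A *m z) + ip (Y k.+1 - y) (gradg y + B *m z)
        + ip (ztil k - z) (- (A^T *m x + B^T *m y - c)))%:E)%E in
  let phi := fun (k : nat) (x : 'cV[R]_nx) (y : 'cV[R]_ny) (z : 'cV[R]_nz) =>
    (tau * sigma)^-1 * nrm2 (Z k - z) + sqn (Shf + S) (X k - x)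
    + sqn (Shg + T) (Y k - y) + sigma * nrm2 (A^T *m x + B^T *m Y k - c) in
  (* xi k = xi_k = ||y^k - y^{k-1}||^2_{Shg+T}, used for k >= 1 *)
  let xi := fun k : nat => sqn (Shg + T) (Y k - Y k.-1) in
  (* s k = s_{k+1} *)
  let s := fun k : nat =>
    sqn (2^-1 *: Sf + S) (X k.+1 - X k) + sqn (2^-1 *: Sg + T) (Y k.+1 - Y k) in
  let Hf := fun alpha : R => 2^-1 *: Sf + S + (2^-1 * (1 - alpha) * sigma) *: (A *m A^T) in
  let Mg := fun alpha : R =>
    2^-1 *: Sg + T + (Num.min tau (1 + tau - tau ^+ 2) * alpha * sigma) *: (B *m B^T) in
  (* t alpha k = t_{k+1} *)
  let t := fun (alpha : R) (k : nat) =>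
    sqn (Hf alpha) (X k.+1 - X k) + sqn (Mg alpha) (Y k.+1 - Y k) in
  (* (a) *)
  (forall (k : nat) (x : 'cV[R]_nx) (y : 'cV[R]_ny) (z : 'cV[R]_nz),
     (Gamma k x y z + (2^-1 * (phi k.+1 x y z - phi k x y z))%:E
      <= (- (2^-1 * (s k + (1 - tau) * sigma * nrm2 (r k.+1)
                     + sigma * nrm2 (A^T *m X k.+1 + B^T *m Y k - c))))%:E)%E)
  /\
  (* (b) *)
  (psd (2^-1 *: Shg + T) ->
   forall alpha : R, 0 < alpha <= 1 ->
   let kappa := 1 - alpha * Num.min tau tau^-1 in
   forall (k : nat), (1 <= k)%N ->
   forall (x : 'cV[R]_nx) (y : 'cV[R]_ny) (z : 'cV[R]_nz),
     (Gamma k x y z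
      + (2^-1 * ((phi k.+1 x y z + kappa * sigma * nrm2 (r k.+1) + alpha * xi k.+1)
                 - (phi k x y z + kappa * sigma * nrm2 (r k) + alpha * xi k)))%:E
      <= (- (2^-1 * (t alpha k
                     + (- tau + alpha * Num.min (1 + tau) (1 + tau^-1))
                       * sigma * nrm2 (r k.+1))))%:E)%E).
Proof.
move=> pp pc _ qp qc _ _ _ _ _ _ _ hSf pSf hShf _ _ hSg pSg hShg _ _ qbf qbg
  sigma_gt0 tau_gt0 hS hT pQx pQy _ _ x_update y_update z_update.
split=> [k x y z | pShT alpha alpha01 kappa [//|k] _ x y z].
  exact: (descent pp pc qp qc hSf pSf hShf hSg pSg hShg qbf qbg sigma_gt0 tau_gt0
    hS hT pQx pQy x_update y_update z_update).
exact: (improved_descent pp pc qp qc hSf pSf hShf hSg pSg hShg qbf qbg sigma_gt0 tau_gt0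
  hS hT pQx pQy x_update y_update z_update pShT).
Qed.
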